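(* Let $N\ge 2$ be an integer and $a\in\mathbb{C}$ a constant. Let $\zeta_1(\tau),\dots,\zeta_N(\tau)$ be (complex-valued) solutions, on a domain of the independent variable $\tau$ on which $\zeta_n(\tau)\neq\zeta_m(\tau)$ for all $n\neq m$, of the system $$\zeta_n''=2\sum_{m=1,\,m\neq n}^{N} a\,\frac{\zeta_n'\,\zeta_m'}{\zeta_n-\zeta_m},\qquad n=1,\dots,N,$$ where primes denote differentiation with respect to $\tau$. Define the monic polynomial $$\Pi(\zeta,\tau)=\prod_{n=1}^{N}\bigl(\zeta-\zeta_n(\tau)\bigr)=\zeta^N+\sum_{m=1}^{N}\gamma_m(\tau)\,\zeta^{N-m}.$$ Then $\Pi$ satisfies the nonlinear PDE $$\Pi_{\tau\tau}\,(\Pi_\zeta)^2+(1-a)\Bigl\{\Pi_{\zeta\zeta}\,(\Pi_\tau)^2-\Pi_\zeta\,\bigl[(\Pi_\tau)^2\bigr]_\zeta\Bigr\}=\Psi\,\Pi,$$ where $\Psi(\zeta,\tau)$ is a polynomial in $\zeta$ of degree (at most) $2N-4$, with coefficients depending on $\tau$.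
   Context: Subscripts on $\Pi$ denote partial derivatives, e.g. $\Pi_\zeta=\partial\Pi/\partial\zeta$, $\Pi_{\tau\tau}=\partial^2\Pi/\partial\tau^2$. The coefficients $\gamma_m(\tau)$ are the coefficients of $\Pi$ as a polynomial in $\zeta$ (so they are the elementary symmetric functions of the $\zeta_n$ up to sign). *)

From HB Require Import structures.
From mathcomp Require Import all_boot all_order all_algebra.
From mathcomp Require Import all_classical all_reals all_analysis.
From mathcomp Require Import complex.
Set Implicit Arguments. Unset Strict Implicit. Unset Printing Implicit Defensive.
Import Order.TTheory GRing.Theory Num.Theory.
Import numFieldNormedType.Exports.
Local Open Scope ring_scope.
Local Open Scope complex_scope.

Section PiDefs.
Variables (R : realType) (N : nat) (z : 'I_N -> R[i] -> R[i]).

Definition Pi (x t : R[i]) : R[i] := \prod_(n < N) (x - z n t).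

Definition Pi_t (x t : R[i]) : R[i] := derive1 (fun s => Pi x s : R[i]^o) t.
Definition Pi_tt (x t : R[i]) : R[i] := derive1 (fun s => Pi_t x s : R[i]^o) t.
Definition Pi_x (x t : R[i]) : R[i] := derive1 (fun y => Pi y t : R[i]^o) x.
Definition Pi_xx (x t : R[i]) : R[i] := derive1 (fun y => Pi_x y t : R[i]^o) x.
Definition Pi_t_sq_x (x t : R[i]) : R[i] := derive1 (fun y => Pi_t y t ^+ 2 : R[i]^o) x.
End PiDefs.

(* Fix tau and write w_n, v_n, u_n for zeta_n, zeta_n', zeta_n''. As polynomials
   in zeta, Pi = prod_n (zeta - w_n), Pi_tau and Pi_tautau have degrees N, N - 1
   and N - 2: the zeta^(N-1) coefficient of Pi_tautau is -sum_n u_n, which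
   vanishes because the right-hand side of the equations of motion is
   antisymmetric in (n, m). So the left-hand side L of the PDE is a polynomial of
   degree at most 3N - 4. At a root w_k write Pi = (zeta - w_k) E and
   Pi_tau = -v_k E + (zeta - w_k) G; the terms in E'(w_k) cancel and
   L(w_k) = E(w_k)^2 (Pi_tautau(w_k) + 2 (1 - a) v_k G(w_k)), while the k-th
   equation of motion says exactly Pi_tautau(w_k) = -2 (1 - a) v_k G(w_k).
   Hence Pi divides L and Psi = L / Pi has degree at most 2N - 4. *)

From HB Require Import structures.
From mathcomp Require Import all_boot all_order all_algebra.
From mathcomp Require Import all_classical all_reals all_analysis.
From mathcomp Require Import complex.
From mathcomp Require Import ring zify.
(* Re-imported so that [setT], [in_setT], [setTD] denote finite sets, not classical ones. *)
From mathcomp Require Import finset.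
Set Implicit Arguments.
Unset Strict Implicit.
Unset Printing Implicit Defensive.
Import Order.TTheory GRing.Theory Num.Theory.
Import numFieldNormedType.Exports.
Local Open Scope ring_scope.

Lemma setD1C (T : finType) (A : {set T}) (i j : T) : A :\ i :\ j = A :\ j :\ i.
Proof. by apply/setP => l; rewrite !inE andbCA. Qed.

Lemma size_deriv_leq (R : nzSemiRingType) (p : {poly R}) :
  (size p^`() <= (size p).-1)%N.
Proof. exact: size_poly. Qed.

Section Derivatives.
Variable K : numFieldType.

Lemma derive1_val (f : K -> K) (x df : K) : is_derive x 1 f df -> derive1 f x = df.
Proof. by move=> fdf; rewrite derive1E derive_val. Qed.

Lemma is_derive_mul (f g : K -> K) (t df dg : K) :
  is_derive t 1 f df -> is_derive t 1 g dg ->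
  is_derive t 1 (fun s => f s * g s) (f t * dg + g t * df).
Proof. by move=> fdf gdg; have := is_deriveM fdf gdg. Qed.

Lemma is_derive_sum_in (I : finType) (A : {pred I}) (f : I -> K -> K) (df : I -> K) (t : K) :
  (forall i, i \in A -> is_derive t 1 (f i) (df i)) ->
  is_derive t 1 (fun s => \sum_(i in A) f i s) (\sum_(i in A) df i).
Proof.
move=> f_A; rewrite -fct_sumE.
elim/big_rec2: _ => [|i g dg iA gdg]; first exact: is_derive_cst.
exact: is_deriveD (f_A i iA) gdg.
Qed.

Lemma is_derive_prod (I : finType) (A : {set I}) (f : I -> K -> K) (df : I -> K) (t : K) :
  (forall i, i \in A -> is_derive t 1 (f i) (df i)) ->
  is_derive t 1 (fun s => \prod_(i in A) f i s)
    (\sum_(i in A) df i * \prod_(j in A :\ i) f j t).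
Proof.
have [k cardA] : exists k, #|A| = k by eexists.
elim: k A cardA => [|k IH] A cardA f_A.
  have A0 := card0_eq cardA.
  have -> : (fun s => \prod_(i in A) f i s) = cst 1.
    by apply/funext => s; rewrite big_pred0.
  by rewrite big_pred0 //; apply: is_derive_cst.
have [i iA] : exists i, i \in A by apply/card_gt0P; rewrite cardA.
have cardAi : #|A :\ i| = k by move: cardA; rewrite (cardsD1 i) iA add1n => -[].
have f_Ai j : j \in A :\ i -> is_derive t 1 (f j) (df j).
  by case/setD1P => _; apply: f_A.
have -> : (fun s => \prod_(j in A) f j s) = (fun s => f i s * \prod_(j in A :\ i) f j s).
  by apply/funext => s; rewrite (big_setD1 i iA).
apply: is_derive_eq (is_derive_mul (f_A i iA) (IH _ cardAi f_Ai)) _.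
rewrite (big_setD1 i iA) addrC mulrC; congr (_ + _).
rewrite mulr_sumr; apply: eq_bigr => j /setD1P[ji jA].
have iAj : i \in A :\ j by rewrite !inE eq_sym ji.
by rewrite (big_setD1 i iAj) setD1C mulrCA.
Qed.

Lemma is_derive_horner (p : {poly K}) (x : K) : is_derive x 1 (horner p) p^`().[x].
Proof.
elim/poly_ind: p => [|p c IH].
  have -> : horner (0 : {poly K}) = cst 0 by apply/funext => y; rewrite horner0.
  by rewrite deriv0 horner0; apply: is_derive_cst.
have -> : horner (p * 'X + c%:P) = horner p * id + cst c.
  by apply/funext => y; rewrite /= !hornerE.
apply: is_derive_eq.
by rewrite derivMXaddC !hornerE [_%:A]mulr1 mulrC.
Qed.

Lemma derive1_horner (f : K -> K) (p : {poly K}) (x : K) :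
  (forall y, f y = p.[y]) -> derive1 f x = p^`().[x].
Proof.
by move=> fp; apply: derive1_val; rewrite (funext fp); apply: is_derive_horner.
Qed.

End Derivatives.

Section PolySize.
Variable R : nzRingType.

Lemma size_sum_leq (I : Type) (r : seq I) (P : pred I) (F : I -> {poly R}) n :
  (forall i, P i -> (size (F i) <= n)%N) -> (size (\sum_(i <- r | P i) F i)%R <= n)%N.
Proof.
move=> F_n; elim/big_rec: _ => [|i p Pi p_n]; first by rewrite size_poly0.
by rewrite (leq_trans (size_polyD _ _)) // geq_max F_n.
Qed.

Lemma size_sum_scale_monic (I : finType) (A : {pred I}) (c : I -> R)
    (p : I -> {poly R}) n :
  (forall i, i \in A -> p i \is monic) -> (forall i, i \in A -> size (p i) = n.+1) ->
  \sum_(i in A) c i = 0 -> (size (\sum_(i in A) c i *: p i)%R <= n)%N.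
Proof.
move=> p_monic p_size c_sum; apply/leq_sizeP => j.
rewrite leq_eqVlt coef_sum => /orP[/eqP <- | n_lt_j].
  rewrite -[RHS]c_sum; apply: eq_bigr => i iA.
  by rewrite coefZ -[n]/(n.+1.-1) -(p_size i iA) -/(lead_coef _) (monicP (p_monic i iA)) mulr1.
by apply: big1 => i iA; rewrite coefZ nth_default ?mulr0 ?p_size.
Qed.

End PolySize.

Section PdeOperator.
Variable R : comNzRingType.

Definition pde_lhs (a : R) (P Q S : {poly R}) : {poly R} :=
  S * P^`() ^+ 2 + (1 - a) *: (P^`()^`() * Q ^+ 2 - P^`() * (Q ^+ 2)^`()).

Lemma horner_pde_lhs (a : R) (P Q S : {poly R}) (x : R) : (pde_lhs a P Q S).[x] =
  S.[x] * P^`().[x] ^+ 2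
  + (1 - a) * (P^`()^`().[x] * Q.[x] ^+ 2 - P^`().[x] * (Q ^+ 2)^`().[x]).
Proof. by rewrite /pde_lhs !hornerE. Qed.

Lemma horner_pde_lhs_XsubC (a b c : R) (E G S : {poly R}) :
  (pde_lhs a (('X - c%:P) * E) (b *: E + ('X - c%:P) * G) S).[c] =
  E.[c] ^+ 2 * (S.[c] - 2 * (1 - a) * b * G.[c]).
Proof.
rewrite /pde_lhs !(derivXsubC, mul1r, derivM, derivZ, deriv_exp, derivD).
rewrite !(hornerXsubC, hornerD, hornerN, hornerM, hornerZ, hornerMn, horner_exp) subrr.
ring.
Qed.

Lemma size_pde_lhs (a : R) (P Q S : {poly R}) (n : nat) :
  (size P <= n.+1)%N -> (size Q <= n)%N -> (size S <= n.-1)%N ->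
  (size (pde_lhs a P Q S) <= 3 * n - 3)%N.
Proof.
move=> P_n Q_n S_n.
have dP := size_deriv_leq P; have ddP := size_deriv_leq P^`().
have dQ2 := size_deriv_leq (Q ^+ 2).
have P2 : (size (P^`() ^+ 2) <= ((size P^`()).-1 * 2).+1)%N := size_poly_exp_leq _ _.
have Q2 : (size (Q ^+ 2) <= ((size Q).-1 * 2).+1)%N := size_poly_exp_leq _ _.
have SP2 : (size (S * P^`() ^+ 2)%R <= 3 * n - 3)%N.
  by apply: leq_trans (size_polyMleq _ _) _; lia.
have P2Q2 : (size (P^`()^`() * Q ^+ 2)%R <= 3 * n - 3)%N.
  by apply: leq_trans (size_polyMleq _ _) _; lia.
have P1Q2 : (size (P^`() * (Q ^+ 2)^`())%R <= 3 * n - 3)%N.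
  by apply: leq_trans (size_polyMleq _ _) _; lia.
rewrite /pde_lhs (leq_trans (size_polyD _ _)) // geq_max SP2.
rewrite (leq_trans (size_scale_leq _ _)) // (leq_trans (size_polyD _ _)) //.
by rewrite geq_max size_polyN P2Q2.
Qed.

End PdeOperator.

Lemma sum_antisym (K : numFieldType) (I : finType) (g : I -> I -> K) :
  (forall i j, g j i = - g i j) -> \sum_i \sum_(j | j != i) g i j = 0.
Proof.
move=> g_anti; set S := (X in X = 0).
have S_opp : S = - S.
  rewrite {1}/S (exchange_big_dep predT) //= -sumrN; apply: eq_bigr => j _.
  by rewrite -sumrN; apply: eq_big => [i | i _]; [rewrite eq_sym | rewrite g_anti].
have S2 : S *+ 2 = 0 by rewrite mulr2n {2}S_opp subrr.
by move/eqP: S2; rewrite mulrn_eq0 => /eqP.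
Qed.

Section NodePolynomial.
Variables (K : numFieldType) (N : nat) (w : 'I_N -> K).
Implicit Types (B : {set 'I_N}) (k : 'I_N) (x : K) (p : {poly K}) (v : 'I_N -> K).

Definition node B : {poly K} := \prod_(j in B) ('X - (w j)%:P).

(* [node_dt v B] and [node_dt2 v u] are the time derivatives of [node B] and
   [node setT] (first and second) when the nodes move with velocities [v] and
   accelerations [u]. *)
Definition node_dt v B : {poly K} := \sum_(m in B) (- v m) *: node (B :\ m).

Definition node_dt2 v u : {poly K} :=
  node_dt u setT + \sum_(m in setT) (- v m) *: node_dt v (setT :\ m).

Lemma horner_node B x : (node B).[x] = \prod_(j in B) (x - w j).
Proof. by rewrite horner_prod; apply: eq_bigr => j _; rewrite hornerXsubC. Qed.

Lemma monic_node B : node B \is monic.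
Proof. exact: monic_prod_XsubC. Qed.

Lemma size_node B : size (node B) = #|B|.+1.
Proof. by rewrite /node -big_enum size_prod_XsubC cardE. Qed.

Lemma card_setTD1 k : #|setT :\ k| = N.-1.
Proof. by rewrite setTD cardsC1 card_ord. Qed.

Lemma in_setTD1 k m : (m \in setT :\ k) = (m != k).
Proof. by rewrite !inE andbT. Qed.

Lemma node_setD1 B k : k \in B -> node B = ('X - (w k)%:P) * node (B :\ k).
Proof. exact: big_setD1. Qed.

Lemma node_dtdp p : injective w -> (forall k, root p (w k)) -> node setT %| p.
Proof.
move=> w_inj p_w; rewrite /node -big_enum -(big_map w xpredT (fun c => 'X - c%:P)).
apply: uniq_roots_dvdp; first by apply/allP => _ /mapP[k _ ->].
by rewrite uniq_rootsE map_inj_uniq ?enum_uniq.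
Qed.

Lemma horner_node_dt v B x :
  (node_dt v B).[x] = \sum_(m in B) - v m * \prod_(j in B :\ m) (x - w j).
Proof. by rewrite horner_sum; apply: eq_bigr => m _; rewrite hornerZ horner_node. Qed.

Lemma horner_node_dt2 v u x : (node_dt2 v u).[x] =
  \sum_(m in setT) (- u m * (node (setT :\ m)).[x] + - v m * (node_dt v (setT :\ m)).[x]).
Proof.
rewrite /node_dt2 {1}/node_dt hornerD !horner_sum -big_split /=.
by apply: eq_bigr => m _; rewrite !hornerZ.
Qed.

Lemma node_dt_setD1 v B k : k \in B ->
  node_dt v B = (- v k) *: node (B :\ k) + ('X - (w k)%:P) * node_dt v (B :\ k).
Proof.
move=> kB; rewrite /node_dt (big_setD1 k kB) mulr_sumr; congr (_ + _).
apply: eq_bigr => m /setD1P[mk mB].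
have kBm : k \in B :\ m by rewrite !inE eq_sym mk.
by rewrite (node_setD1 kBm) scalerAr setD1C.
Qed.

Lemma horner_node_dt_root v B k : k \in B ->
  (node_dt v B).[w k] = - v k * (node (B :\ k)).[w k].
Proof. by move=> kB; rewrite (node_dt_setD1 v kB) !hornerE subrr mul0r addr0. Qed.

Lemma size_node_dt v B : (size (node_dt v B) <= #|B|)%N.
Proof.
apply: size_sum_leq => m mB; rewrite (leq_trans (size_scale_leq _ _)) //.
by rewrite size_node (cardsD1 m B) mB.
Qed.

Lemma size_node_dt2 v u : \sum_(m < N) u m = 0 -> (size (node_dt2 v u) <= N.-1)%N.
Proof.
move=> u_sum; rewrite (leq_trans (size_polyD _ _)) // geq_max; apply/andP; split.
  apply: size_sum_scale_monic => [m _ | m _ |]; first exact: monic_node.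
    by rewrite size_node card_setTD1.
  rewrite sumrN (eq_bigl xpredT) ?u_sum ?oppr0 // => m; exact: in_setT.
apply: size_sum_leq => m _; rewrite (leq_trans (size_scale_leq _ _)) //.
by rewrite -(card_setTD1 m) size_node_dt.
Qed.

Section EquationsOfMotion.
Variables (a : K) (v u : 'I_N -> K).
Hypothesis w_inj : injective w.
Hypothesis eq_motion :
  forall n, u n = 2 * \sum_(m < N | m != n) a * (v n * v m) / (w n - w m).

Lemma sum_accel_eq0 : \sum_(n < N) u n = 0.
Proof.
under eq_bigr do rewrite eq_motion mulr_sumr.
by apply: sum_antisym => n m; rewrite -[w m - _]opprB invrN; ring.
Qed.

Lemma accel_node_dt k :
  u k * (node (setT :\ k)).[w k] = 2 * a * (- v k) * (node_dt v (setT :\ k)).[w k].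
Proof.
rewrite eq_motion -!mulrA; congr (2 * _).
rewrite horner_sum mulr_suml mulrA mulr_sumr.
apply: eq_big => [m | m mk]; first by rewrite in_setTD1.
have wkm : w k - w m != 0 by rewrite subr_eq0 (inj_eq w_inj) eq_sym.
have mTk : m \in setT :\ k by rewrite in_setTD1.
rewrite (node_setD1 mTk) hornerM hornerXsubC hornerZ.
by field.
Qed.

Lemma horner_node_dt2_root k :
  (node_dt2 v u).[w k] = 2 * (1 - a) * (- v k) * (node_dt v (setT :\ k)).[w k].
Proof.
have kT : k \in setT by rewrite in_setT.
rewrite /node_dt2 hornerD horner_node_dt_root // horner_sum (big_setD1 k kT) /=.
have -> : \sum_(m in setT :\ k) ((- v m) *: node_dt v (setT :\ m)).[w k] =
          - v k * (node_dt v (setT :\ k)).[w k].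
  rewrite horner_sum mulr_sumr; apply: eq_bigr => m; rewrite in_setTD1 => mk.
  have kTm : k \in setT :\ m by rewrite in_setTD1 eq_sym.
  by rewrite !hornerZ horner_node_dt_root // setD1C mulrCA.
by rewrite hornerZ mulNr accel_node_dt; ring.
Qed.

Lemma node_dtdp_pde_lhs :
  node setT %| pde_lhs a (node setT) (node_dt v setT) (node_dt2 v u).
Proof.
apply: node_dtdp w_inj _ => k; apply/eqP.
have kT : k \in setT by rewrite in_setT.
rewrite {1}(node_setD1 kT) (node_dt_setD1 v kT) horner_pde_lhs_XsubC.
by rewrite horner_node_dt2_root subrr mulr0.
Qed.

Lemma size_pde_lhs_node :
  (size (pde_lhs a (node setT) (node_dt v setT) (node_dt2 v u)) <= 3 * N - 3)%N.
Proof.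
apply: size_pde_lhs; first by rewrite size_node cardsT card_ord.
  by rewrite -[N in (_ <= N)%N]card_ord -cardsT size_node_dt.
exact/size_node_dt2/sum_accel_eq0.
Qed.

End EquationsOfMotion.
End NodePolynomial.

Section PiAsPolynomial.
Variables (R : realType) (N : nat) (a : R[i]) (D : set R[i]^o)
  (z : 'I_N -> R[i]^o -> R[i]^o).
Hypothesis D_open : open D.
Hypothesis z_sep : forall (n m : 'I_N) (t : R[i]^o), D t -> n != m -> z n t != z m t.
Hypothesis z_derivable : forall (n : 'I_N) (t : R[i]^o), D t -> derivable (z n) t 1.
Hypothesis z'_derivable :
  forall (n : 'I_N) (t : R[i]^o), D t -> derivable (derive1 (z n)) t 1.
Hypothesis eq_motion : forall (n : 'I_N) (t : R[i]^o), D t ->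
  derive1 (derive1 (z n)) t =
  2 * \sum_(m < N | m != n) a * (derive1 (z n) t * derive1 (z m) t) / (z n t - z m t).

Let pos (t : R[i]) (n : 'I_N) : R[i] := z n t.
Let vel (t : R[i]) (n : 'I_N) : R[i] := derive1 (z n) t.
Let acc (t : R[i]) (n : 'I_N) : R[i] := derive1 (derive1 (z n)) t.

Definition Psi (t : R[i]) : {poly R[i]} :=
  pde_lhs a (node (pos t) setT) (node_dt (pos t) (vel t) setT)
    (node_dt2 (pos t) (vel t) (acc t)) %/ node (pos t) setT.

Lemma pos_inj t : D t -> injective (pos t).
Proof. by move=> Dt n m /eqP; apply: contraTeq => nm; apply: z_sep. Qed.

Lemma is_derive_pos n t : D t -> is_derive t 1 (z n) (vel t n).
Proof. by move=> Dt; rewrite /vel derive1E; apply/derivableP/z_derivable. Qed.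

Lemma is_derive_vel n t : D t -> is_derive t 1 (derive1 (z n)) (acc t n).
Proof. by move=> Dt; rewrite /acc derive1E; apply/derivableP/z'_derivable. Qed.

Lemma Pi_node x t : Pi z x t = (node (pos t) setT).[x].
Proof. by rewrite horner_node; apply: eq_bigl => n; rewrite in_setT. Qed.

Lemma Pi_x_node x t : Pi_x z x t = (node (pos t) setT)^`().[x].
Proof. exact: derive1_horner (Pi_node ^~ t). Qed.

Lemma Pi_xx_node x t : Pi_xx z x t = (node (pos t) setT)^`()^`().[x].
Proof. exact: derive1_horner (Pi_x_node ^~ t). Qed.

Lemma is_derive_node_pos x t B : D t ->
  is_derive t 1 (fun s => (node (pos s) B).[x]) (node_dt (pos t) (vel t) B).[x].
Proof.
move=> Dt; rewrite horner_node_dt.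
have -> : (fun s => (node (pos s) B).[x]) = (fun s => \prod_(j in B) (x - z j s)).
  by apply/funext => s; rewrite horner_node.
apply: is_derive_prod => j _.
by have := is_deriveB (is_derive_cst x t 1) (is_derive_pos j Dt); rewrite sub0r.
Qed.

Lemma Pi_t_node x t : D t -> Pi_t z x t = (node_dt (pos t) (vel t) setT).[x].
Proof.
move=> Dt; apply: derive1_val.
rewrite (funext (Pi_node x)); exact: is_derive_node_pos.
Qed.

Lemma Pi_t_sq_x_node x t : D t ->
  Pi_t_sq_x z x t = ((node_dt (pos t) (vel t) setT) ^+ 2)^`().[x].
Proof. by move=> Dt; apply: derive1_horner => y; rewrite Pi_t_node // horner_exp. Qed.

Lemma Pi_tt_node x t : D t -> Pi_tt z x t = (node_dt2 (pos t) (vel t) (acc t)).[x].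
Proof.
move=> Dt; rewrite /Pi_tt derive1E.
rewrite (near_eq_derive (g := fun s : R[i]^o =>
    \sum_(m in setT) - vel s m * (node (pos s) (setT :\ m)).[x] : R[i]^o)); last first.
  apply: filterS (open_nbhs_nbhs (conj D_open Dt)) => s Ds.
  by rewrite Pi_t_node // horner_sum; apply: eq_bigr => m _; rewrite hornerZ.
rewrite -derive1E; apply: derive1_val.
rewrite horner_node_dt2; apply: is_derive_sum_in => m _.
have dvel : is_derive t 1 (fun s : R[i]^o => - vel s m : R[i]^o) (- acc t m).
  exact: is_deriveN (is_derive_vel m Dt).
apply: is_derive_eq (is_derive_mul dvel (is_derive_node_pos x (setT :\ m) Dt)) _.
by rewrite addrC mulrC.
Qed.

Lemma size_Psi t : D t -> (size (Psi t) <= 2 * N - 3)%N.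
Proof.
move=> Dt; rewrite size_divp ?monic_neq0 ?monic_node // size_node cardsT card_ord.
apply: leq_trans (leq_sub2r _ (size_pde_lhs_node (fun n => eq_motion n Dt))) _.
lia.
Qed.

Lemma Pi_pde t : D t -> forall x,
  Pi_tt z x t * Pi_x z x t ^+ 2
  + (1 - a) * (Pi_xx z x t * Pi_t z x t ^+ 2 - Pi_x z x t * Pi_t_sq_x z x t)
  = (Psi t).[x] * Pi z x t.
Proof.
move=> Dt x; rewrite Pi_tt_node // Pi_x_node Pi_xx_node Pi_t_node // Pi_t_sq_x_node //.
rewrite -horner_pde_lhs Pi_node -hornerM divpK //.
exact: node_dtdp_pde_lhs (pos_inj Dt) (fun n => eq_motion n Dt).
Qed.

End PiAsPolynomial.

Theorem lemmaD1 (R : realType) (N : nat) (a : R[i]) (D : set R[i]^o)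
    (z : 'I_N -> R[i]^o -> R[i]^o) :
  (2 <= N)%N ->
  open D ->
  (forall (n m : 'I_N) (t : R[i]^o), D t -> n != m -> z n t != z m t) ->
  (forall (n : 'I_N) (t : R[i]^o), D t -> derivable (z n) t 1) ->
  (forall (n : 'I_N) (t : R[i]^o), D t -> derivable (derive1 (z n)) t 1) ->
  (forall (n : 'I_N) (t : R[i]^o), D t ->
     derive1 (derive1 (z n)) t =
     2 * \sum_(m < N | m != n)
           a * (derive1 (z n) t * derive1 (z m) t) / (z n t - z m t)) ->
  exists Psi : R[i] -> {poly R[i]},
    (forall t, D t -> (size (Psi t) <= (2 * N - 3))%N) /\
    (forall t, D t -> forall x : R[i],
       Pi_tt z x t * Pi_x z x t ^+ 2
       + (1 - a) * (Pi_xx z x t * Pi_t z x t ^+ 2 - Pi_x z x t * Pi_t_sq_x z x t)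
       = (Psi t).[x] * Pi z x t).
Proof.
move=> _ D_open z_sep z_der z'_der eq_motion.
exists (Psi a z); split=> t Dt; first exact (size_Psi eq_motion Dt).
exact (Pi_pde D_open z_sep z_der z'_der eq_motion Dt).
Qed.
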